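(* Let $\alpha\in\mathbb R$ and $n\ge1$. There is a one-to-one correspondence between $(2n+1)$-dimensional $\alpha$-coK\''ahler Lie algebras $(\mathfrak g,\varphi,\xi,\eta,g)$ and $2n$-dimensional K\''ahler Lie algebras $(\mathfrak h,J,h)$ together with a derivation $D\in\mathrm{Der}(\mathfrak h)$ such that $D+\alpha I$ is an infinitesimal symplectic transformation and $DJ=JD$. The correspondence is $\mathfrak h=\ker\eta$, $J=\varphi|_{\mathfrak h}$, $h=g|_{\mathfrak h\times\mathfrak h}$, $D=\mathrm{ad}_\xi|_{\mathfrak h}$, with inverse $\mathfrak g=\mathbb R\xi\oplus\mathfrak h$, $[x,y]=[x,y]_{\mathfrak h}$, $[\xi,x]=Dx$, $\eta(\xi)=1$, $\eta|_{\mathfrak h}=0$, $\varphi(\xi)=0$, $\varphi|_{\mathfrak h}=J$, $g(\xi,\cdot)=\eta$, $g|_{\mathfrak h\times\mathfrak h}=h$.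
   Context: For a Lie algebra, $d\eta(x,y)=-\eta([x,y])$ and $d\omega(x,y,z)=-\omega([x,y],z)-\omega([y,z],x)-\omega([z,x],y)$. An almost contact metric structure on a $(2n+1)$-dimensional Lie algebra $\mathfrak g$ is $(\varphi,\xi,\eta,g)$ with $\eta(\xi)=1$, $\varphi^2=-I+\eta\otimes\xi$, $\eta\circ\varphi=0$, $g$ positive definite with $g(\varphi x,\varphi y)=g(x,y)-\eta(x)\eta(y)$; $\Phi(x,y)=g(x,\varphi y)$. It is almost $\alpha$-coK\''ahler if $\eta\wedge\Phi^n\neq0$, $d\eta=0$, $d\Phi=2\alpha\,\eta\wedge\Phi$; it is $\alpha$-coK\''ahler if moreover it is normal, i.e. $N_\varphi+2d\eta\otimes\xi=0$, where $N_\varphi(x,y)=\varphi^2[x,y]+[\varphi x,\varphi y]-\varphi[\varphi x,y]-\varphi[x,\varphi y]$. An almost K\''ahler structure on a $2n$-dimensional Lie algebra $\mathfrak h$ is $(J,h)$, $J^2=-I$, $h$ positive definite with $h(Jx,Jy)=h(x,y)$, such that $\Omega(x,y)=h(x,Jy)$ is closed and nondegenerate; it is K\''ahler if moreover $N_J=0$. A linear $\theta$ on $\mathfrak h$ is an infinitesimal symplectic transformation if $(x,y)\mapsto\Omega(\theta x,y)$ is symmetric. *)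

From HB Require Import structures.
From mathcomp Require Import all_boot all_order fingroup perm all_algebra.
From mathcomp Require Import reals.
Set Implicit Arguments. Unset Strict Implicit. Unset Printing Implicit Defensive.
Import Order.TTheory GRing.Theory Num.Theory.
Local Open Scope ring_scope.

Section LieDefs.
Variable R : realType.

Definition vdim (V : vectType R) : nat := \dim (fullv : {vspace V}).

Section Linear.
Variables U W : lmodType R.
Definition lin_map (f : U -> W) := forall (a : R) x y, f (a *: x + y) = a *: f x + f y.
End Linear.

Section OnV.
Variable V : vectType R.

Definition lin_form (f : V -> R) := forall (a : R) x y, f (a *: x + y) = a * f x + f y.
Definition bilin_form (b : V -> V -> R) :=
  (forall z, lin_form (fun x => b x z)) /\ (forall x, lin_form (b x)).
Definition bilin_map (br : V -> V -> V) :=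
  (forall z, lin_map (fun x => br x z)) /\ (forall x, lin_map (br x)).
Definition inner_product (b : V -> V -> R) :=
  [/\ bilin_form b, (forall x y, b x y = b y x) & (forall x, x != 0 -> 0 < b x x)].

Definition lie_bracket (br : V -> V -> V) :=
  [/\ bilin_map br, (forall x, br x x = 0)
    & (forall x y z, br x (br y z) + br y (br z x) + br z (br x y) = 0)].

Definition d1 (br : V -> V -> V) (eta : V -> R) (x y : V) : R := - eta (br x y).
Definition d2 (br : V -> V -> V) (om : V -> V -> R) (x y z : V) : R :=
  - om (br x y) z - om (br y z) x - om (br z x) y.
Definition wedge12 (eta : V -> R) (om : V -> V -> R) (x y z : V) : R :=
  eta x * om y z + eta y * om z x + eta z * om x y.
(* the (2n+1)-form eta /\ om^n evaluated on (x_0, ..., x_{2n}) *)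
Definition wedge_top (n : nat) (eta : V -> R) (om : V -> V -> R)
    (x : 'I_(n.*2.+1) -> V) : R :=
  (2%:R ^+ n)^-1 * \sum_(s : 'S_(n.*2.+1))
     (-1) ^+ (odd_perm s) * eta (x (s ord0)) *
     \prod_(i < n) om (x (s (inord i.*2.+1))) (x (s (inord i.*2.+2))).


Definition nijenhuis (br : V -> V -> V) (f : V -> V) (x y : V) : V :=
  f (f (br x y)) + br (f x) (f y) - f (br (f x) y) - f (br x (f y)).

Definition fund_form (g : V -> V -> R) (phi : V -> V) (x y : V) : R := g x (phi y).

Definition almost_contact_metric (phi : V -> V) (xi : V) (eta : V -> R)
    (g : V -> V -> R) :=
  [/\ lin_map phi, lin_form eta, eta xi = 1,
      (forall x, phi (phi x) = - x + eta x *: xi)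
    & [/\ 
      (forall x, eta (phi x) = 0),
      inner_product g
    & (forall x y, g (phi x) (phi y) = g x y - eta x * eta y)]].

Definition almost_alpha_coKahler (n : nat) (alpha : R) (br : V -> V -> V)
    (phi : V -> V) (xi : V) (eta : V -> R) (g : V -> V -> R) :=
  [/\ lie_bracket br, almost_contact_metric phi xi eta g,
      (exists x, @wedge_top n eta (fund_form g phi) x != 0),
      (forall x y, d1 br eta x y = 0)
    & (forall x y z, d2 br (fund_form g phi) x y z
                     = 2%:R * alpha * wedge12 eta (fund_form g phi) x y z)].

Definition normal_acs (br : V -> V -> V) (phi : V -> V) (xi : V) (eta : V -> R) :=
  forall x y, nijenhuis br phi x y + (2%:R * d1 br eta x y) *: xi = 0.

Definition alpha_coKahler n alpha br phi xi eta g :=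
  almost_alpha_coKahler n alpha br phi xi eta g /\ normal_acs br phi xi eta.

Definition almost_hermitian (J : V -> V) (h : V -> V -> R) :=
  [/\ lin_map J, (forall x, J (J x) = - x), inner_product h
    & (forall x y, h (J x) (J y) = h x y)].

Definition kahler (br : V -> V -> V) (J : V -> V) (h : V -> V -> R) :=
  [/\ lie_bracket br, almost_hermitian J h,
      (forall x y z, d2 br (fund_form h J) x y z = 0),
      (forall x, (forall y, fund_form h J x y = 0) -> x = 0)
    & (forall x y, nijenhuis br J x y = 0)].

Definition derivation (br : V -> V -> V) (D : V -> V) :=
  lin_map D /\ (forall x y, D (br x y) = br (D x) y + br x (D y)).

Definition inf_symplectic (om : V -> V -> R) (theta : V -> V) :=
  lin_map theta /\ (forall x y, om (theta x) y = om (theta y) x).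

Definition kahler_der (alpha : R) (br : V -> V -> V) (J : V -> V)
    (h : V -> V -> R) (D : V -> V) :=
  [/\ kahler br J h, derivation br D,
      inf_symplectic (fund_form h J) (fun x => D x + alpha *: x)
    & (forall x, D (J x) = J (D x))].

Definition ker_form (eta : V -> R) : {vspace V} := lker (linfun (eta : V -> R^o)).

Definition res_br (eta : V -> R) (br : V -> V -> V)
   (x y : subvs_of (ker_form eta)) : subvs_of (ker_form eta) :=
  vsproj (ker_form eta) (br (vsval x) (vsval y)).
Definition res_J (eta : V -> R) (phi : V -> V) (x : subvs_of (ker_form eta))
   : subvs_of (ker_form eta) := vsproj (ker_form eta) (phi (vsval x)).
Definition res_h (eta : V -> R) (g : V -> V -> R) (x y : subvs_of (ker_form eta))
   : R := g (vsval x) (vsval y).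
Definition res_D (eta : V -> R) (br : V -> V -> V) (xi : V)
   (x : subvs_of (ker_form eta)) : subvs_of (ker_form eta) :=
  vsproj (ker_form eta) (br xi (vsval x)).

End OnV.

(* ---- extension g = R xi (+) h, realised as R^o * h ---- *)
Section Ext.
Variable H : vectType R.
Definition ext_br (brH : H -> H -> H) (D : H -> H) (p q : (R^o * H)%type)
  : (R^o * H)%type := (0, brH p.2 q.2 + p.1 *: D q.2 - q.1 *: D p.2).
Definition ext_phi (J : H -> H) (p : (R^o * H)%type) : (R^o * H)%type := (0, J p.2).
Definition ext_xi : (R^o * H)%type := (1, 0).
Definition ext_eta (p : (R^o * H)%type) : R := p.1.
Definition ext_g (h : H -> H -> R) (p q : (R^o * H)%type) : R := p.1 * q.1 + h p.2 q.2.
End Ext.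

Definition coK_iso (V1 V2 : vectType R)
   (br1 : V1 -> V1 -> V1) (phi1 : V1 -> V1) (xi1 : V1) (eta1 : V1 -> R) (g1 : V1 -> V1 -> R)
   (br2 : V2 -> V2 -> V2) (phi2 : V2 -> V2) (xi2 : V2) (eta2 : V2 -> R) (g2 : V2 -> V2 -> R)
   (f : V1 -> V2) :=
  [/\ lin_map f, bijective f,
      (forall x y, f (br1 x y) = br2 (f x) (f y)),
      (forall x, f (phi1 x) = phi2 (f x))
    & [/\ f xi1 = xi2,
      (forall x, eta2 (f x) = eta1 x)
    & (forall x y, g2 (f x) (f y) = g1 x y)]].

Definition kahler_der_iso (H1 H2 : vectType R)
   (br1 : H1 -> H1 -> H1) (J1 : H1 -> H1) (h1 : H1 -> H1 -> R) (D1 : H1 -> H1)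
   (br2 : H2 -> H2 -> H2) (J2 : H2 -> H2) (h2 : H2 -> H2 -> R) (D2 : H2 -> H2)
   (f : H1 -> H2) :=
  [/\ lin_map f, bijective f,
      (forall x y, f (br1 x y) = br2 (f x) (f y))
    & [/\ (forall x, f (J1 x) = J2 (f x)),
      (forall x y, h2 (f x) (f y) = h1 x y)
    & (forall x, f (D1 x) = D2 (f x))]].

Definition iso_ext_res (V : vectType R) (xi : V) (eta : V -> R)
  (p : (R^o * subvs_of (ker_form eta))%type) : V := p.1 *: xi + vsval p.2.
Definition iso_H_ker (H : vectType R) (x : H)
  : subvs_of (ker_form (@ext_eta H)) := vsproj (ker_form (@ext_eta H)) (0, x).

End LieDefs.

Arguments wedge_top {R V} n eta om x.
Arguments almost_alpha_coKahler {R V} n alpha br phi xi eta g.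
Arguments alpha_coKahler {R V} n alpha br phi xi eta g.
Arguments ker_form {R V} eta.
Arguments res_br {R V} eta br x y.
Arguments res_J {R V} eta phi x.
Arguments res_h {R V} eta g x y.
Arguments res_D {R V} eta br xi x.
Arguments ext_br {R H} brH D p q.
Arguments ext_phi {R H} J p.
Arguments ext_xi {R H}.
Arguments ext_eta {R H} p.
Arguments ext_g {R H} h p q.
Arguments coK_iso {R V1 V2} br1 phi1 xi1 eta1 g1 br2 phi2 xi2 eta2 g2 f.
Arguments kahler_der_iso {R H1 H2} br1 J1 h1 D1 br2 J2 h2 D2 f.
Arguments iso_ext_res {R V} xi eta p.
Arguments iso_H_ker {R H} x.
Arguments vdim {R} V.

From HB Require Import structures.
From mathcomp Require Import all_boot all_order all_algebra fingroup perm.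
From mathcomp Require Import reals.
From mathcomp Require Import zify ring lra.
Set Implicit Arguments. Unset Strict Implicit. Unset Printing Implicit Defensive.
Import Order.TTheory GRing.Theory Num.Theory.
Local Open Scope ring_scope.

(* For an alpha-coKahler algebra, d eta = 0 says that ker eta contains all brackets, so
   it is an ideal, ad_xi restricts to a derivation D of it (Jacobi), and phi, g restrict
   to an almost Hermitian structure (J, h) on it. Evaluated on ker eta, the equations
   d Phi = 2 alpha eta /\ Phi and N_phi = 0 say that (J, h) is Kahler; evaluated on
   (xi, x, y) they say that D + alpha I is infinitesimal symplectic and that DJ = JD.
   Conversely, these identities are exactly what makes the semidirect product R xi |x_D h
   alpha-coKahler, and the two constructions are inverse to each other up to the
   canonical maps. The one non-algebraic condition is eta /\ Phi^n <> 0. Evaluate it on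
   xi, u_1, J u_1, ..., u_n, J u_n, where the u_i are nonzero and each u_i is orthogonal
   to u_j and J u_j for j <> i: a permutation contributes only if it fixes xi and permutes
   the pairs {u_i, J u_i}; every such permutation is a product of swaps inside a pair and
   swaps of two pairs, which do not change its term, so all nonzero terms equal the term
   of the identity, the product of the - h(u_i, u_i). *)

(** * Linear algebra *)

Section LinearMaps.
Variable R : realType.

Section LinMap.
Variables (U W : lmodType R) (f : U -> W).
Hypothesis f_lin : lin_map f.

Lemma lin_mapD x y : f (x + y) = f x + f y.
Proof. by have := f_lin 1 x y; rewrite !scale1r. Qed.
Lemma lin_map0 : f 0 = 0.
Proof. by apply: (addrI (f 0)); rewrite -lin_mapD !addr0. Qed.
Lemma lin_mapZ a x : f (a *: x) = a *: f x.
Proof. by have := f_lin a x 0; rewrite !addr0 lin_map0 addr0. Qed.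
Lemma lin_mapN x : f (- x) = - f x.
Proof. by rewrite -scaleN1r lin_mapZ scaleN1r. Qed.
Lemma lin_mapB x y : f (x - y) = f x - f y.
Proof. by rewrite lin_mapD lin_mapN. Qed.
End LinMap.

Section LinForm.
Variables (V : vectType R) (f : V -> R).
Hypothesis f_lin : lin_form f.

Let f_linR : lin_map (f : V -> R^o) := f_lin.
Lemma lin_formD x y : f (x + y) = f x + f y. Proof. exact: (lin_mapD f_linR). Qed.
Lemma lin_form0 : f 0 = 0. Proof. exact: (lin_map0 f_linR). Qed.
Lemma lin_formZ a x : f (a *: x) = a * f x. Proof. exact: (lin_mapZ f_linR). Qed.
Lemma lin_formN x : f (- x) = - f x. Proof. exact: (lin_mapN f_linR). Qed.
Lemma lin_formB x y : f (x - y) = f x - f y. Proof. exact: (lin_mapB f_linR). Qed.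

Lemma lin_form_linfunE v : linfun (f : V -> R^o) v = f v.
Proof.
exact: (lfunE (HB.pack (f : V -> R^o) (GRing.isLinear.Build R V R^o *:%R f f_lin))).
Qed.

Lemma mem_ker_form v : (v \in ker_form f) = (f v == 0).
Proof. by rewrite memv_ker lin_form_linfunE. Qed.

Lemma vdim_ker_form v : f v != 0 -> (vdim (subvs_of (ker_form f))).+1 = vdim V.
Proof.
move=> fv_neq0; rewrite /vdim !dimvf /=.
have := limg_ker_dim (linfun (f : V -> R^o)) fullv; rewrite capfv dimvf.
have : (\dim (limg (linfun (f : V -> R^o))) <= 1)%N.
  by rewrite -[1%N]/(dim R^o) -dimvf dimvS ?subvf.
have : (0 < \dim (limg (linfun (f : V -> R^o))))%N.
  rewrite lt0n dimv_eq0; apply: contra fv_neq0 => /eqP img0.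
  by have := memv_img (linfun (f : V -> R^o)) (memvf v); rewrite img0 memv0 lin_form_linfunE.
have -> : dim (subvs_of (ker_form f)) = \dim (ker_form f) by [].
rewrite /ker_form; lia.
Qed.
End LinForm.

Lemma dim_capv_ker_form (V : vectType R) (f : V -> R) (U : {vspace V}) :
  (\dim U <= (\dim (U :&: ker_form f)).+1)%N.
Proof.
have := limg_ker_dim (linfun (f : V -> R^o)) U.
have : (\dim (linfun (f : V -> R^o) @: U) <= 1)%N.
  by rewrite -[1%N]/(dim R^o) -dimvf dimvS ?subvf.
rewrite /ker_form; lia.
Qed.

Lemma exists_subspace_in_kernels (V : vectType R) (fs : nat -> V -> R) :
  (forall i, lin_form (fs i)) -> forall m,
  exists2 U : {vspace V}, (vdim V <= \dim U + m)%N &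
    forall v, v \in U -> forall i, (i < m)%N -> fs i v = 0.
Proof.
move=> fs_lin; elim=> [|m [U dimU U_ker]]; first by exists fullv; rewrite ?addn0.
exists (U :&: ker_form (fs m))%VS => [|v]; first by have := dim_capv_ker_form (fs m) U; lia.
rewrite memv_cap mem_ker_form // => /andP[vU /eqP fmv] i; rewrite ltnS leq_eqVlt.
by case/orP => [/eqP -> //|]; apply: U_ker.
Qed.

Lemma vsval_eq0 (V : vectType R) (U : {vspace V}) (u : subvs_of U) :
  (vsval u == 0) = (u == 0).
Proof. by rewrite -[RHS](inj_eq subvs_inj) linear0. Qed.

Lemma eq_coord_vbasis (V : vectType R) (v w : V) :
  (forall i, coord (vbasis fullv) i v = coord (vbasis fullv) i w) -> v = w.
Proof.
move=> vw; rewrite (coord_vbasis (memvf v)) (coord_vbasis (memvf w)).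
by under eq_bigr do rewrite vw.
Qed.

Lemma scale_regularE (a b : R) : a *: (b : R^o) = a * b. Proof. by []. Qed.

End LinearMaps.

(* An identity between linear combinations of vectors holds iff it holds for each
   coordinate in a basis, where it becomes a ring identity. *)
Ltac vect_ring := apply: eq_coord_vbasis => ?;
  rewrite ?(linearD, linearB, linearN, scalarZ, linear0, scale_regularE); ring.

(** * Bilinear forms, Lie brackets and Hermitian structures *)

Section Bilinear.
Variables (R : realType) (V : vectType R).

Section BilinForm.
Variable b : V -> V -> R.
Hypothesis b_bil : bilin_form b.

Lemma bilinDl x y z : b (x + y) z = b x z + b y z.
Proof. exact: (lin_formD (proj1 b_bil z)). Qed.
Lemma bilinDr x y z : b z (x + y) = b z x + b z y.
Proof. exact: (lin_formD (proj2 b_bil z)). Qed.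
Lemma bilinZl a x z : b (a *: x) z = a * b x z.
Proof. exact: (lin_formZ (proj1 b_bil z)). Qed.
Lemma bilinZr a x z : b z (a *: x) = a * b z x.
Proof. exact: (lin_formZ (proj2 b_bil z)). Qed.
Lemma bilinNr x z : b z (- x) = - b z x.
Proof. exact: (lin_formN (proj2 b_bil z)). Qed.
Lemma bilin0l z : b 0 z = 0.
Proof. exact: (lin_form0 (proj1 b_bil z)). Qed.
Lemma bilin0r z : b z 0 = 0.
Proof. exact: (lin_form0 (proj2 b_bil z)). Qed.
End BilinForm.

Section LieBracket.
Variable br : V -> V -> V.
Hypothesis br_lie : lie_bracket br.

Let br_bil : bilin_map br. Proof. by case: br_lie. Qed.
Lemma brDl x y z : br (x + y) z = br x z + br y z.
Proof. exact: (lin_mapD (proj1 br_bil z)). Qed.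
Lemma brDr x y z : br z (x + y) = br z x + br z y.
Proof. exact: (lin_mapD (proj2 br_bil z)). Qed.
Lemma brZl a x z : br (a *: x) z = a *: br x z.
Proof. exact: (lin_mapZ (proj1 br_bil z)). Qed.
Lemma brZr a x z : br z (a *: x) = a *: br z x.
Proof. exact: (lin_mapZ (proj2 br_bil z)). Qed.
Lemma brNr x z : br z (- x) = - br z x.
Proof. exact: (lin_mapN (proj2 br_bil z)). Qed.
Lemma br0l z : br 0 z = 0.
Proof. exact: (lin_map0 (proj1 br_bil z)). Qed.
Lemma brxx x : br x x = 0.
Proof. by case: br_lie. Qed.

Lemma br_anticomm x y : br x y = - br y x.
Proof.
apply/eqP; rewrite -addr_eq0; apply/eqP.
by have := brxx (x + y); rewrite brDl !brDr !brxx add0r addr0.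
Qed.

Lemma br_jacobi x y z : br x (br y z) = - br y (br z x) - br z (br x y).
Proof. by case: br_lie => _ _ /(_ x y z) /eqP; rewrite -addrA addr_eq0 opprD => /eqP. Qed.
End LieBracket.

Section InnerProduct.
Variable b : V -> V -> R.
Hypothesis b_ip : inner_product b.

Lemma ip_bilin : bilin_form b. Proof. by case: b_ip. Qed.
Lemma ip_sym x y : b x y = b y x. Proof. by case: b_ip. Qed.
Lemma ip_gt0 x : x != 0 -> 0 < b x x. Proof. by case: b_ip => _ _; apply. Qed.
End InnerProduct.

Section Hermitian.
Variables (J : V -> V) (h : V -> V -> R).
Hypothesis Jh_herm : almost_hermitian J h.

Lemma herm_lin : lin_map J. Proof. by case: Jh_herm. Qed.
Lemma herm_JJ x : J (J x) = - x. Proof. by case: Jh_herm. Qed.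
Lemma herm_ip : inner_product h. Proof. by case: Jh_herm. Qed.
Lemma herm_isometry x y : h (J x) (J y) = h x y. Proof. by case: Jh_herm. Qed.

Lemma herm_J_skew x y : h x (J y) = - h (J x) y.
Proof. by rewrite -herm_isometry herm_JJ (bilinNr (ip_bilin herm_ip)). Qed.

Lemma fund_form_skew x y : fund_form h J x y = - fund_form h J y x.
Proof. by rewrite /fund_form herm_J_skew (ip_sym herm_ip). Qed.

Lemma fund_form_xx x : fund_form h J x x = 0.
Proof. by have := fund_form_skew x x; lra. Qed.

Lemma herm_orthogonal_family n : vdim V = n.*2 -> forall k, (k <= n)%N ->
  exists u : nat -> V, (forall i, (i < k)%N -> u i != 0) /\
    (forall i j, (i < k)%N -> (j < k)%N -> i != j ->
       h (u i) (u j) = 0 /\ h (u i) (J (u j)) = 0).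
Proof.
move=> dimV; elim=> [|k IH] lt_kn; first by exists (fun=> 0).
have [u [u_neq0 u_orth]] := IH (ltnW lt_kn).
pose fs i y := h y (if odd i then J (u i./2) else u i./2).
have fs_lin i : lin_form (fs i) by move=> a x y; apply: (proj1 (ip_bilin herm_ip)).
have [U dimU U_orth] := exists_subspace_in_kernels fs_lin k.*2.
have [v v_neq0 vU] : exists2 v, v != 0 & v \in U.
  exists (vpick U); last exact: memv_pick.
  by rewrite vpick0 -dimv_eq0; move: dimU dimV; lia.
have v_u i : (i < k)%N -> h v (u i) = 0.
  by move=> ik; have := U_orth v vU i.*2 ltac:(lia); rewrite /fs odd_double doubleK.
have v_Ju i : (i < k)%N -> h v (J (u i)) = 0.
  by move=> ik; have := U_orth v vU i.*2.+1 ltac:(lia); rewrite /fs /= odd_double uphalf_double.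
exists (fun i => if i == k then v else u i); split=> [i|i j].
  by rewrite ltnS leq_eqVlt; case: (eqVneq i k) => [_ _|_ /= /u_neq0].
rewrite !ltnS (leq_eqVlt i) (leq_eqVlt j).
case: (eqVneq i k) => [-> _|_ /= ik]; case: (eqVneq j k) => [-> _|_ /= jk].
- by [].
- by move=> _; split; [exact: v_u | exact: v_Ju].
- by move=> _; rewrite (ip_sym herm_ip) v_u // herm_J_skew (ip_sym herm_ip) v_Ju ?oppr0.
- exact: u_orth.
Qed.
End Hermitian.

End Bilinear.

(** * The top form [eta /\ Phi^n] *)

Section Slots.
Variable n : nat.
Local Notation N := n.*2.+1.

Definition odd_slot (i : 'I_n) : 'I_N := inord i.*2.+1.
Definition even_slot (i : 'I_n) : 'I_N := inord i.*2.+2.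
Definition block (p : 'I_N) : nat := (p.-1)./2.

Lemma odd_slotE i : odd_slot i = i.*2.+1 :> nat.
Proof. by rewrite inordK //; have := ltn_ord i; lia. Qed.
Lemma even_slotE i : even_slot i = i.*2.+2 :> nat.
Proof. by rewrite inordK //; have := ltn_ord i; lia. Qed.

Lemma block_odd_slot i : block (odd_slot i) = i.
Proof. by rewrite /block odd_slotE; lia. Qed.
Lemma block_even_slot i : block (even_slot i) = i.
Proof. by rewrite /block even_slotE; lia. Qed.

Lemma odd_slot_inj : injective odd_slot.
Proof. by move=> i j /(congr1 val); rewrite /= !odd_slotE => ij; apply: ord_inj; lia. Qed.
Lemma even_slot_inj : injective even_slot.
Proof. by move=> i j /(congr1 val); rewrite /= !even_slotE => ij; apply: ord_inj; lia. Qed.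
Lemma odd_even_slot_neq i j : odd_slot i != even_slot j.
Proof. by apply/eqP => /(congr1 val); rewrite /= odd_slotE even_slotE; lia. Qed.
Lemma odd_slot_neq0 i : odd_slot i != ord0.
Proof. by apply/eqP => /(congr1 val); rewrite /= odd_slotE. Qed.
Lemma even_slot_neq0 i : even_slot i != ord0.
Proof. by apply/eqP => /(congr1 val); rewrite /= even_slotE. Qed.

Lemma block_lt (p : 'I_N) : p != ord0 -> (block p < n)%N.
Proof.
move=> p_neq0; have p_gt0 : (0 < p)%N by rewrite lt0n.
by have := ltn_ord p; rewrite /block; lia.
Qed.

Lemma slot_of_block (p : 'I_N) (i : 'I_n) : p != ord0 -> block p = i ->
  p = odd_slot i \/ p = even_slot i.
Proof.
rewrite /block => p_neq0 pi; have p_gt0 : (0 < p)%N by rewrite lt0n.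
have [pE|pE] : p = i.*2.+1 :> nat \/ p = i.*2.+2 :> nat by lia.
  by left; apply: val_inj; rewrite /= odd_slotE.
by right; apply: val_inj; rewrite /= even_slotE.
Qed.

Lemma slot_cases (p : 'I_N) : p != ord0 ->
  exists i : 'I_n, p = odd_slot i \/ p = even_slot i.
Proof. by move=> p_neq0; exists (Ordinal (block_lt p_neq0)); apply: slot_of_block. Qed.

End Slots.

Arguments odd_slot_inj {n}.
Arguments even_slot_inj {n}.

Notation swap_slots i := (tperm (odd_slot i) (even_slot i)).
Notation swap_blocks i j :=
  (tperm (odd_slot i) (odd_slot j) * tperm (even_slot i) (even_slot j))%g.

Section Swaps.
Variable n : nat.
Implicit Types i j k : 'I_n.

Lemma swap_slots_odd i k : k != i -> swap_slots i (odd_slot k) = odd_slot k.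
Proof.
by move=> ki; rewrite tpermD // ?(inj_eq odd_slot_inj) 1?eq_sym ?odd_even_slot_neq.
Qed.
Lemma swap_slots_even i k : k != i -> swap_slots i (even_slot k) = even_slot k.
Proof.
by move=> ki; rewrite tpermD // ?(inj_eq even_slot_inj) ?odd_even_slot_neq // eq_sym.
Qed.

Lemma swap_blocks0 i j : swap_blocks i j ord0 = ord0.
Proof. by rewrite permM !tpermD ?odd_slot_neq0 ?even_slot_neq0. Qed.
Lemma swap_blocks_odd i j k : swap_blocks i j (odd_slot k) = odd_slot (tperm i j k).
Proof. by rewrite permM -(inj_tperm _ _ _ odd_slot_inj) tpermD // eq_sym odd_even_slot_neq. Qed.
Lemma swap_blocks_even i j k : swap_blocks i j (even_slot k) = even_slot (tperm i j k).
Proof.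
by rewrite permM (tpermD (odd_even_slot_neq _ _)) ?odd_even_slot_neq //
  (inj_tperm _ _ _ even_slot_inj).
Qed.

Lemma odd_swap_blocks i j : i != j -> odd_perm (swap_blocks i j) = false.
Proof.
by move=> ij; rewrite odd_permM !odd_tperm !(inj_eq odd_slot_inj) !(inj_eq even_slot_inj) ij.
Qed.
End Swaps.

Lemma leq_ltn_sum (I : finType) (F G : I -> nat) i0 :
  (forall i, F i <= G i)%N -> (F i0 < G i0)%N -> (\sum_i F i < \sum_i G i)%N.
Proof.
move=> le_FG lt_FG0; rewrite (bigD1 i0) //= [X in (_ < X)%N](bigD1 i0) //=.
by rewrite -addSn leq_add // leq_sum.
Qed.

Section Displacement.
Variable n : nat.
Local Notation N := n.*2.+1.
Implicit Types (s : 'S_N) (p : 'I_N).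

(* Counting also the points that leave their block makes a single swap of two blocks
   decrease the displacement, even when it does not create fixed points. *)
Definition displacement_at s p : nat := ((s p != p) + (block (s p) != block p))%N.
Definition displacement s : nat := \sum_p displacement_at s p.

Lemma displacement_at_le2 s p : (displacement_at s p <= 2)%N.
Proof. by rewrite /displacement_at; case: (_ != _); case: (_ != _). Qed.

Lemma displacement_at_block_neq s p : block (s p) != block p -> displacement_at s p = 2%N.
Proof.
move=> block_sp; rewrite /displacement_at block_sp.
by have -> : s p != p by apply: contra block_sp => /eqP ->.
Qed.

Lemma displacement_swap_slots s i :
  s (odd_slot i) = even_slot i -> s (even_slot i) = odd_slot i ->
  (displacement (swap_slots i * s) < displacement s)%N.
Proof.
move=> sa sb; apply: (@leq_ltn_sum _ _ _ (odd_slot i)) => [p|].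
  rewrite /displacement_at permM.
  have [->|pa] := eqVneq p (odd_slot i); first by rewrite tpermL sb !eqxx.
  have [->|pb] := eqVneq p (even_slot i); first by rewrite tpermR sa !eqxx.
  by rewrite tpermD // eq_sym.
by rewrite /displacement_at permM tpermL sb sa !eqxx eq_sym odd_even_slot_neq.
Qed.

Lemma displacement_swap_blocks s i j : i != j ->
  block (s (odd_slot j)) = i -> block (s (even_slot j)) = i ->
  block (s (odd_slot i)) != i -> block (s (even_slot i)) != i ->
  (displacement (swap_blocks i j * s) < displacement s)%N.
Proof.
move=> ij sc sd sa sb; pose moved := [:: odd_slot i; even_slot i; odd_slot j; even_slot j].
have moved2 p : p \in moved -> displacement_at s p = 2%N.
  rewrite !inE => /or4P[] /eqP ->; apply: displacement_at_block_neq;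
    by rewrite ?block_odd_slot ?block_even_slot ?sa ?sb ?sc ?sd // eq_sym.
apply: (@leq_ltn_sum _ _ _ (odd_slot i)) => [p|].
  have [/moved2 ->|] := boolP (p \in moved); first exact: displacement_at_le2.
  rewrite !inE !negb_or => /and4P[pa pb pc pd].
  by rewrite /displacement_at !permM !tpermD // eq_sym.
rewrite moved2 ?mem_head // /displacement_at permM swap_blocks_odd tpermL sc block_odd_slot.
by rewrite eqxx addn0; case: (_ != _).
Qed.
End Displacement.

Section WedgeTerms.
Variables (R : realType) (n : nat).
Local Notation N := n.*2.+1.
Variables (e : 'I_N -> R) (w : 'I_N -> 'I_N -> R).

Definition wedge_term (s : 'S_N) : R :=
  (-1) ^+ odd_perm s * e (s ord0) * \prod_(i < n) w (s (odd_slot i)) (s (even_slot i)).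

Hypothesis w_anti : forall p q, w p q = - w q p.

Lemma wedge_term_swap_slots s i : wedge_term (swap_slots i * s) = wedge_term s.
Proof.
rewrite /wedge_term odd_permM odd_tperm odd_even_slot_neq signr_addb expr1 !permM.
rewrite tpermD ?odd_slot_neq0 ?even_slot_neq0 //.
rewrite (bigD1 i) //= [in RHS](bigD1 i) //= !permM tpermL tpermR w_anti.
under eq_bigr => k ki do rewrite !permM swap_slots_odd // swap_slots_even //.
by rewrite mulN1r !mulNr !mulrN opprK.
Qed.

Lemma wedge_term_swap_blocks s i j : i != j ->
  wedge_term (swap_blocks i j * s) = wedge_term s.
Proof.
move=> ij; rewrite /wedge_term odd_permM odd_swap_blocks //= permM swap_blocks0.
rewrite [in RHS](reindex_perm (tperm i j)).
by under eq_bigr => k _ do rewrite permM swap_blocks_odd permM swap_blocks_even.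
Qed.

Hypothesis e_supp : forall p, e p != 0 -> p = ord0.
Hypothesis w_supp : forall p q, w p q != 0 ->
  [/\ p != ord0, q != ord0, p != q & block p = block q].

Lemma wedge_term_support s : wedge_term s != 0 ->
  s ord0 = ord0 /\ forall i, w (s (odd_slot i)) (s (even_slot i)) != 0.
Proof.
rewrite /wedge_term => ws_neq0; split.
  by apply: e_supp; apply: contraNneq ws_neq0 => ->; rewrite mulr0 mul0r.
by move=> i; apply: contraNneq ws_neq0 => w0; rewrite (bigD1 i) //= w0 mul0r mulr0.
Qed.

Lemma wedge_term_descent s : wedge_term s != 0 -> s != 1%g ->
  exists2 t, wedge_term (t * s) = wedge_term s & (displacement (t * s) < displacement s)%N.
Proof.
move=> ws_neq0 s_neq1; have [s0 w_neq0] := wedge_term_support ws_neq0.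
have [p sp] : exists p, s p != p.
  apply/existsP; apply: contraR s_neq1 => /existsPn s_fix.
  by apply/eqP/permP => p; rewrite perm1; apply/eqP; rewrite -[_ == _]negbK s_fix.
have [i p_slot] : exists i, p = odd_slot i \/ p = even_slot i.
  by apply: slot_cases; apply: contra_neq sp => ->.
have [sa_neq0 sb_neq0 sab block_sab] := w_supp (w_neq0 i).
have [block_sa|block_sa] := eqVneq (block (s (odd_slot i))) i.
  have block_sb := etrans (esym block_sab) block_sa.
  have [sa sb] : s (odd_slot i) = even_slot i /\ s (even_slot i) = odd_slot i.
    have [] := slot_of_block sa_neq0 block_sa; have [] := slot_of_block sb_neq0 block_sb;
      move=> sbE saE; rewrite sbE saE ?eqxx // in sab *.
    by exfalso; case: p_slot sp => ->; rewrite ?saE ?sbE eqxx.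
  exists (swap_slots i); first exact: wedge_term_swap_slots.
  exact: displacement_swap_slots.
have [q sq] : exists q, s q = odd_slot i by exists (s^-1 (odd_slot i))%g; rewrite permKV.
have [j q_slot] : exists j, q = odd_slot j \/ q = even_slot j.
  by apply: slot_cases; apply: contra_neq (odd_slot_neq0 i) => q0; rewrite -sq q0.
have [_ _ _ block_scd] := w_supp (w_neq0 j).
have block_sc : block (s (odd_slot j)) = i.
  by case: q_slot sq => -> sq; rewrite ?sq ?block_scd ?sq block_odd_slot.
have ij : i != j by apply/eqP => ij; move: block_sa; rewrite {1}ij block_sc eqxx.
exists (swap_blocks i j); first exact: wedge_term_swap_blocks.
by apply: displacement_swap_blocks; rewrite -?block_scd -?block_sab.
Qed.

Lemma wedge_term_eq1 s : wedge_term s != 0 -> wedge_term s = wedge_term 1%g.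
Proof.
have [m] := ubnP (displacement s); elim: m s => // m IH s; rewrite ltnS => dis_s ws_neq0.
have [->//|s_neq1] := eqVneq s 1%g.
have [t wts dis_ts] := wedge_term_descent ws_neq0 s_neq1.
by rewrite -wts; apply: IH; [exact: leq_trans dis_ts dis_s | rewrite wts].
Qed.

Lemma sum_wedge_term_neq0 : wedge_term 1%g != 0 -> \sum_(s : 'S_N) wedge_term s != 0.
Proof.
move=> w1_neq0; rewrite (bigID (fun s => wedge_term s == 0)) /= big1; last by move=> s /eqP.
rewrite add0r (eq_bigr (fun _ => wedge_term 1%g)); last by move=> s; apply: wedge_term_eq1.
rewrite sumr_const mulrn_eq0 negb_or w1_neq0 andbT -lt0n.
by apply/card_gt0P; exists 1%g.
Qed.
End WedgeTerms.

Lemma wedge_topE (R : realType) (V : vectType R) n (eta : V -> R) (om : V -> V -> R)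
    (x : 'I_n.*2.+1 -> V) :
  wedge_top n eta om x = (2%:R ^+ n)^-1 *
    \sum_s wedge_term (fun p => eta (x p)) (fun p q => om (x p) (x q)) s.
Proof. by []. Qed.

(** * From a Kahler algebra with a derivation to an [alpha]-coKahler algebra *)

Section Extension.
Variables (R : realType) (H : vectType R).
Local Notation V := (R^o * H)%type.

Lemma pairD (a b : R^o) (x y : H) : ((a, x) + (b, y) : V) = (a + b, x + y). Proof. by []. Qed.
Lemma pairZ (c : R) (a : R^o) (x : H) : c *: ((a, x) : V) = (c * a, c *: x). Proof. by []. Qed.
Lemma pairN (a : R^o) (x : H) : - ((a, x) : V) = (- a, - x). Proof. by []. Qed.

Lemma vdim_ext : vdim V = (vdim H).+1.
Proof. by rewrite /vdim !dimvf. Qed.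

Lemma ext_fund_formE (J : H -> H) (h : H -> H -> R) p q :
  fund_form (ext_g h) (ext_phi J) p q = fund_form h J p.2 q.2.
Proof. by rewrite /fund_form /ext_g /= mulr0 add0r. Qed.

Lemma mem_ker_ext_eta (p : V) : (p \in ker_form (@ext_eta _ H)) = (p.1 == 0).
Proof. exact: mem_ker_form. Qed.

Lemma iso_H_kerK (x : H) : vsval (iso_H_ker x) = (0, x).
Proof. by rewrite vsprojK // mem_ker_ext_eta. Qed.

Lemma ext_lie (brH : H -> H -> H) (D : H -> H) :
  lie_bracket brH -> derivation brH D -> lie_bracket (ext_br brH D).
Proof.
move=> brH_lie [D_lin D_der]; split; first split.
- move=> [c z] a [a1 x1] [a2 x2]; rewrite /ext_br /= !pairZ !pairD /= mulr0 addr0.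
  congr (_, _); rewrite (brDl brH_lie) (brZl brH_lie) (lin_mapD D_lin) (lin_mapZ D_lin).
  vect_ring.
- move=> [c z] a [a1 x1] [a2 x2]; rewrite /ext_br /= !pairZ !pairD /= mulr0 addr0.
  congr (_, _); rewrite (brDr brH_lie) (brZr brH_lie) (lin_mapD D_lin) (lin_mapZ D_lin).
  vect_ring.
- by move=> [a x]; rewrite /ext_br /= (brxx brH_lie) add0r subrr.
- move=> [a x] [b y] [c z]; rewrite /ext_br /= !pairD /= !addr0; congr (_, _).
  rewrite !(brDr brH_lie) ?(brNr brH_lie) ?(brZr brH_lie) ?(lin_mapD D_lin) ?(lin_mapN D_lin).
  rewrite ?(lin_mapZ D_lin) !D_der (br_jacobi brH_lie x y z) !(br_anticomm brH_lie (D _)).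
  vect_ring.
Qed.

Section Hermitian.
Variables (J : H -> H) (h : H -> H -> R).
Hypothesis Jh_herm : almost_hermitian J h.

Let h_ip := herm_ip Jh_herm.
Let h_bil := ip_bilin h_ip.

Lemma ext_acm : almost_contact_metric (ext_phi J) ext_xi ext_eta (ext_g h).
Proof.
have J_lin := herm_lin Jh_herm.
split=> //.
- move=> a [a1 x1] [a2 x2]; rewrite /ext_phi /= !pairZ !pairD.
  by rewrite (lin_mapD J_lin) (lin_mapZ J_lin) mulr0 addr0.
- move=> [a x]; rewrite /ext_phi /ext_eta /ext_xi /= (herm_JJ Jh_herm).
  by rewrite pairZ pairN pairD scaler0 addr0 mulr1 addNr.
split=> //.
- split; first split.
  + move=> [c z] a [a1 x1] [a2 x2]; rewrite /ext_g /=.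
    by rewrite (bilinDl h_bil) (bilinZl h_bil) scale_regularE; ring.
  + move=> [c z] a [a1 x1] [a2 x2]; rewrite /ext_g /=.
    by rewrite (bilinDr h_bil) (bilinZr h_bil) scale_regularE; ring.
  + by move=> [a x] [b y]; rewrite /ext_g /= mulrC (ip_sym h_ip).
  + move=> [a x] /= ax_neq0; rewrite /ext_g /=.
    have [x0|x_neq0] := eqVneq x 0.
      have a_neq0 : a != 0 by apply: contraNneq ax_neq0 => a0; rewrite a0 x0.
      by rewrite x0 (bilin0l h_bil) addr0 lt0r mulf_neq0 //= -expr2 sqr_ge0.
    by have := ip_gt0 h_ip x_neq0; have := sqr_ge0 a; rewrite expr2; lra.
- by move=> [a x] [b y]; rewrite /ext_g /ext_phi /ext_eta /= (herm_isometry Jh_herm); ring.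
Qed.

Lemma ext_wedge_top_neq0 n : vdim H = n.*2 ->
  exists x, wedge_top n ext_eta (fund_form (ext_g h) (ext_phi J)) x != 0.
Proof.
move=> dimH; have [u [u_neq0 u_orth]] := herm_orthogonal_family Jh_herm dimH (leqnn n).
pose y (p : 'I_n.*2.+1) := if odd p then u (block p) else J (u (block p)).
pose x p : V := if p == ord0 then (1, 0) else (0, y p).
exists x; rewrite wedge_topE mulf_neq0 ?invr_eq0 ?expf_neq0 ?pnatr_eq0 //.
apply: sum_wedge_term_neq0 => [p q|p|p q|]; rewrite ?ext_fund_formE.
- exact: (fund_form_skew Jh_herm).
- by rewrite /x; case: (eqVneq p ord0) => [->|_] //=; rewrite eqxx.
- rewrite /x; have [->|p_neq0] := eqVneq p ord0.
    by rewrite /fund_form (bilin0l h_bil) eqxx.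
  have [->|q_neq0] := eqVneq q ord0.
    by rewrite /fund_form (lin_map0 (herm_lin Jh_herm)) (bilin0r h_bil) eqxx.
  move=> /= w_neq0; split=> //; first by apply: contraNneq w_neq0 => ->; rewrite fund_form_xx.
  apply/eqP; apply: contraNT w_neq0 => block_pq; apply/eqP.
  have [uu uJu] := u_orth _ _ (block_lt p_neq0) (block_lt q_neq0) block_pq.
  rewrite /fund_form /y; case: (odd p); case: (odd q);
    by rewrite ?(herm_isometry Jh_herm) ?(herm_JJ Jh_herm) ?(bilinNr h_bil) ?uu ?uJu ?oppr0.
- rewrite /wedge_term odd_perm1 perm1 /x eqxx /= expr0 !mul1r.
  apply/prodf_neq0 => i _; rewrite ext_fund_formE !perm1 !ifN ?odd_slot_neq0 ?even_slot_neq0 //=.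
  rewrite /y odd_slotE even_slotE /= odd_double block_odd_slot block_even_slot /fund_form.
  rewrite (herm_JJ Jh_herm) (bilinNr h_bil) oppr_eq0 lt0r_neq0 //.
  exact: (ip_gt0 h_ip (u_neq0 _ (ltn_ord i))).
Qed.
End Hermitian.

Section KahlerDerivation.
Variables (alpha : R) (brH : H -> H -> H) (J : H -> H) (h : H -> H -> R) (D : H -> H).
Hypothesis kd : kahler_der alpha brH J h D.

Let kahler_brH : kahler brH J h. Proof. by case: kd. Qed.
Let brH_lie : lie_bracket brH. Proof. by case: kahler_brH. Qed.
Let Jh_herm : almost_hermitian J h. Proof. by case: kahler_brH. Qed.
Let J_lin := herm_lin Jh_herm.
Let D_der : derivation brH D. Proof. by case: kd. Qed.
Let Om_closed x y z : d2 brH (fund_form h J) x y z = 0. Proof. by case: kahler_brH. Qed.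
Let J_integrable x y : nijenhuis brH J x y = 0. Proof. by case: kahler_brH. Qed.
Let D_symp x y : fund_form h J (D x + alpha *: x) y = fund_form h J (D y + alpha *: y) x.
Proof. by case: kd => _ _ []. Qed.
Let DJ x : D (J x) = J (D x). Proof. by case: kd. Qed.
Let Om_lin z : lin_form (fun x => fund_form h J x z).
Proof. by move=> a x y; apply: (proj1 (ip_bilin (herm_ip Jh_herm))). Qed.

Lemma ext_d2 p q r : d2 (ext_br brH D) (fund_form (ext_g h) (ext_phi J)) p q r
   = 2%:R * alpha * wedge12 ext_eta (fund_form (ext_g h) (ext_phi J)) p q r.
Proof.
case: p q r => [a x] [b y] [c z]; rewrite /d2 /wedge12 !ext_fund_formE /ext_br /ext_eta /=.
have Om_br : fund_form h J (brH x y) z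
    = - fund_form h J (brH y z) x - fund_form h J (brH z x) y.
  by have := Om_closed x y z; rewrite /d2; lra.
have Om_D u v :
    fund_form h J (D u) v = fund_form h J (D v) u - 2%:R * alpha * fund_form h J u v.
  have := D_symp u v; rewrite !(lin_formD (Om_lin _)) !(lin_formZ (Om_lin _)).
  by rewrite (fund_form_skew Jh_herm v u); lra.
rewrite !(lin_formB (Om_lin _)) !(lin_formD (Om_lin _)) !(lin_formZ (Om_lin _)).
by rewrite Om_br (Om_D y z) (Om_D z x) (Om_D x y); ring.
Qed.

Lemma ext_normal : normal_acs (ext_br brH D) (ext_phi J) ext_xi ext_eta.
Proof.
move=> [a x] [b y]; rewrite /nijenhuis /d1 /ext_br /ext_phi /ext_eta /ext_xi /=.
rewrite oppr0 mulr0 scale0r addr0.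
apply: injective_projections => /=; first by rewrite !(addr0, subr0, add0r, scale0r).
rewrite !scale0r !subr0 addr0 -[RHS](J_integrable x y) /nijenhuis.
rewrite !(lin_mapD J_lin) ?(lin_mapN J_lin) ?(lin_mapZ J_lin) !(herm_JJ Jh_herm) !DJ.
rewrite (lin_map0 J_lin) !(herm_JJ Jh_herm); vect_ring.
Qed.

Lemma ext_alpha_coKahler n : vdim H = n.*2 ->
  alpha_coKahler n alpha (ext_br brH D) (ext_phi J) ext_xi ext_eta (ext_g h).
Proof.
move=> dimH; split; last exact: ext_normal.
split; [exact: ext_lie | exact: ext_acm | exact: ext_wedge_top_neq0 | | exact: ext_d2].
by move=> p q; rewrite /d1 /ext_br /ext_eta /= oppr0.
Qed.

Lemma iso_H_ker_is_iso :
  kahler_der_iso brH J h D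
    (res_br ext_eta (ext_br brH D)) (res_J ext_eta (ext_phi J))
    (res_h ext_eta (ext_g h)) (res_D ext_eta (ext_br brH D) ext_xi) (@iso_H_ker _ H).
Proof.
have vsprojE (p : V) : p.1 == 0 -> vsproj (ker_form ext_eta) p = iso_H_ker p.2.
  by case: p => a x /= /eqP ->.
split.
- by move=> a x y; apply: subvs_inj; rewrite linearP /= !iso_H_kerK pairZ pairD mulr0 addr0.
- apply: (@Bijective _ _ _ (fun u => (vsval u).2)) => [x|u]; first by rewrite iso_H_kerK.
  apply: subvs_inj; rewrite iso_H_kerK; have := subvsP u; rewrite mem_ker_ext_eta.
  by case: (vsval u) => a y /= /eqP ->.
- by move=> x y; rewrite /res_br !iso_H_kerK vsprojE //= !scale0r subr0 addr0.
split.
- by move=> x; rewrite /res_J iso_H_kerK vsprojE.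
- by move=> x y; rewrite /res_h !iso_H_kerK /ext_g /= mul0r add0r.
- move=> x; rewrite /res_D iso_H_kerK vsprojE //=.
  by rewrite (br0l brH_lie) scale1r scale0r subr0 add0r.
Qed.

Lemma kahler_der_to_coKahler n : vdim H = n.*2 ->
  [/\ vdim V = n.*2.+1,
      alpha_coKahler n alpha (ext_br brH D) (ext_phi J) ext_xi ext_eta (ext_g h)
    & kahler_der_iso brH J h D
        (res_br ext_eta (ext_br brH D)) (res_J ext_eta (ext_phi J))
        (res_h ext_eta (ext_g h)) (res_D ext_eta (ext_br brH D) ext_xi) (@iso_H_ker _ H)].
Proof.
move=> dimH; split; [by rewrite vdim_ext dimH | exact: ext_alpha_coKahler | ].
exact: iso_H_ker_is_iso.
Qed.
End KahlerDerivation.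

End Extension.

(** * From an [alpha]-coKahler algebra to a Kahler algebra with a derivation *)

Section AlmostContactMetric.
Variables (R : realType) (V : vectType R).
Variables (phi : V -> V) (xi : V) (eta : V -> R) (g : V -> V -> R).
Hypothesis acm : almost_contact_metric phi xi eta g.

Let phi_lin : lin_map phi. Proof. by case: acm. Qed.
Let eta_xi : eta xi = 1. Proof. by case: acm. Qed.
Let phi2 x : phi (phi x) = - x + eta x *: xi. Proof. by case: acm. Qed.
Let eta_phi x : eta (phi x) = 0. Proof. by case: acm => _ _ _ _ []. Qed.
Let g_ip : inner_product g. Proof. by case: acm => _ _ _ _ []. Qed.
Let g_phi x y : g (phi x) (phi y) = g x y - eta x * eta y.
Proof. by case: acm => _ _ _ _ []. Qed.
Let g_bil := ip_bilin g_ip.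

Lemma acm_phi_xi : phi xi = 0.
Proof.
have := phi2 (phi xi); rewrite eta_phi scale0r addr0 [phi (phi xi)]phi2 eta_xi scale1r addNr.
by rewrite (lin_map0 phi_lin) => /esym/eqP; rewrite oppr_eq0 => /eqP.
Qed.

Lemma acm_g_xi v : g xi v = eta v.
Proof. by have := g_phi xi v; rewrite acm_phi_xi (bilin0l g_bil) eta_xi mul1r; lra. Qed.

Lemma acm_fund_form_skew x y : fund_form g phi x y = - fund_form g phi y x.
Proof.
rewrite /fund_form -[in LHS](subr0 (g x _)) -(mulr0 (eta x)) -(eta_phi y) -g_phi phi2.
rewrite (bilinDr g_bil) (bilinNr g_bil) (bilinZr g_bil) (ip_sym g_ip _ xi) acm_g_xi.
by rewrite eta_phi mulr0 addr0 (ip_sym g_ip).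
Qed.

Lemma acm_fund_form_xi x : fund_form g phi x xi = 0.
Proof. by rewrite /fund_form acm_phi_xi (bilin0r g_bil). Qed.
End AlmostContactMetric.

Section Restriction.
Variables (R : realType) (alpha : R) (n : nat) (V : vectType R).
Variables (br : V -> V -> V) (phi : V -> V) (xi : V) (eta : V -> R) (g : V -> V -> R).
Hypothesis coK : alpha_coKahler n alpha br phi xi eta g.

Let coK_almost : almost_alpha_coKahler n alpha br phi xi eta g. Proof. by case: coK. Qed.
Let br_lie : lie_bracket br. Proof. by case: coK_almost. Qed.
Let acm : almost_contact_metric phi xi eta g. Proof. by case: coK_almost. Qed.
Let phi_lin : lin_map phi. Proof. by case: acm. Qed.
Let eta_lin : lin_form eta. Proof. by case: acm. Qed.
Let eta_xi : eta xi = 1. Proof. by case: acm. Qed.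
Let phi2 x : phi (phi x) = - x + eta x *: xi. Proof. by case: acm. Qed.
Let eta_phi x : eta (phi x) = 0. Proof. by case: acm => _ _ _ _ []. Qed.
Let g_ip : inner_product g. Proof. by case: acm => _ _ _ _ []. Qed.
Let g_phi x y : g (phi x) (phi y) = g x y - eta x * eta y.
Proof. by case: acm => _ _ _ _ []. Qed.
Let g_bil := ip_bilin g_ip.
Let eta_br x y : eta (br x y) = 0.
Proof. by case: coK_almost => _ _ _ /(_ x y) /eqP; rewrite /d1 oppr_eq0 => /eqP. Qed.
Let d2_Phi x y z :
  d2 br (fund_form g phi) x y z = 2%:R * alpha * wedge12 eta (fund_form g phi) x y z.
Proof. by case: coK_almost. Qed.
Let phi_integrable x y : nijenhuis br phi x y = 0.
Proof. by case: coK => _ /(_ x y); rewrite /d1 eta_br oppr0 mulr0 scale0r addr0. Qed.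
Let Phi_lin z : lin_form (fun x => fund_form g phi x z).
Proof. by move=> a x y; apply: (proj1 g_bil). Qed.

Local Notation K := (ker_form eta).

Lemma eta_vsval (u : subvs_of K) : eta (vsval u) = 0.
Proof. by apply/eqP; rewrite -(mem_ker_form eta_lin) subvsP. Qed.
Lemma res_brE u v : vsval (res_br eta br u v) = br (vsval u) (vsval v).
Proof. by rewrite /res_br vsprojK // (mem_ker_form eta_lin) eta_br. Qed.
Lemma res_JE u : vsval (res_J eta phi u) = phi (vsval u).
Proof. by rewrite /res_J vsprojK // (mem_ker_form eta_lin) eta_phi. Qed.
Lemma res_DE u : vsval (res_D eta br xi u) = br xi (vsval u).
Proof. by rewrite /res_D vsprojK // (mem_ker_form eta_lin) eta_br. Qed.
Lemma res_fund_formE u v :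
  fund_form (res_h eta g) (res_J eta phi) u v = fund_form g phi (vsval u) (vsval v).
Proof. by rewrite /fund_form /res_h res_JE. Qed.

Local Ltac vsval_push :=
  rewrite ?(linearD, linearB, linearN, linearZ, linear0) /= ?(res_brE, res_JE, res_DE).

Lemma res_lie : lie_bracket (res_br eta br).
Proof.
split.
- split=> [z a x y|x a y z]; apply: subvs_inj; do 3 vsval_push.
    by rewrite (brDl br_lie) (brZl br_lie).
  by rewrite (brDr br_lie) (brZr br_lie).
- by move=> x; apply: subvs_inj; do 3 vsval_push; rewrite (brxx br_lie).
- by move=> x y z; apply: subvs_inj; do 3 vsval_push; case: br_lie.
Qed.

Lemma res_herm : almost_hermitian (res_J eta phi) (res_h eta g).
Proof.
split.
- move=> a x y; apply: subvs_inj; do 3 vsval_push.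
  by rewrite (lin_mapD phi_lin) (lin_mapZ phi_lin).
- by move=> x; apply: subvs_inj; do 3 vsval_push; rewrite phi2 eta_vsval scale0r addr0.
- split; first split=> [z a x y|x a y z]; rewrite /res_h; do 3 vsval_push.
  + by rewrite (bilinDl g_bil) (bilinZl g_bil).
  + by rewrite (bilinDr g_bil) (bilinZr g_bil).
  + by move=> x y; rewrite /res_h (ip_sym g_ip).
  + by move=> x x_neq0; apply: (ip_gt0 g_ip); rewrite vsval_eq0.
- by move=> x y; rewrite /res_h !res_JE g_phi !eta_vsval mulr0 subr0.
Qed.

Lemma res_kahler : kahler (res_br eta br) (res_J eta phi) (res_h eta g).
Proof.
split; [exact: res_lie | exact: res_herm | | |].
- move=> x y z; rewrite /d2 !res_fund_formE !res_brE.
  have := d2_Phi (vsval x) (vsval y) (vsval z).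
  by rewrite /d2 /wedge12 !eta_vsval !mul0r !addr0 mulr0.
- move=> x Phi_x0; have := Phi_x0 (res_J eta phi x).
  rewrite res_fund_formE res_JE /fund_form phi2 eta_vsval scale0r addr0 (bilinNr g_bil).
  move/eqP; rewrite oppr_eq0; apply: contraTeq => x_neq0.
  by rewrite lt0r_neq0 // ip_gt0 // vsval_eq0.
- by move=> x y; apply: subvs_inj; rewrite /nijenhuis; do 3 vsval_push; apply: phi_integrable.
Qed.

Lemma res_der : derivation (res_br eta br) (res_D eta br xi).
Proof.
split=> [a x y|x y]; apply: subvs_inj; do 3 vsval_push.
  by rewrite (brDr br_lie) (brZr br_lie).
rewrite (br_jacobi br_lie xi) (br_anticomm br_lie (vsval y) xi) (brNr br_lie).
by rewrite (br_anticomm br_lie (vsval y) (br xi (vsval x))); vect_ring.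
Qed.

Lemma res_symp : inf_symplectic (fund_form (res_h eta g) (res_J eta phi))
    (fun x => res_D eta br xi x + alpha *: x).
Proof.
split=> [a x y /=|x y].
  by apply: subvs_inj; do 3 vsval_push; rewrite (brDr br_lie) (brZr br_lie); vect_ring.
rewrite !res_fund_formE; do 3 vsval_push.
rewrite !(lin_formD (Phi_lin _)) !(lin_formZ (Phi_lin _)).
have := d2_Phi xi (vsval x) (vsval y).
rewrite /d2 /wedge12 eta_xi !eta_vsval (acm_fund_form_xi acm).
rewrite (br_anticomm br_lie (vsval y) xi) (lin_formN (Phi_lin _)).
by rewrite (acm_fund_form_skew acm (vsval y) (vsval x)); lra.
Qed.

Lemma res_DJ x : res_D eta br xi (res_J eta phi x) = res_J eta phi (res_D eta br xi x).
Proof.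
apply: subvs_inj; do 3 vsval_push.
have := phi_integrable xi (vsval x); rewrite /nijenhuis (acm_phi_xi acm) !(br0l br_lie).
rewrite !(lin_map0 phi_lin) phi2 eta_br scale0r !addr0 subr0 => /eqP.
rewrite subr_eq0 => /eqP N_xi.
have := phi2 (br xi (phi (vsval x))); rewrite eta_br scale0r addr0 -N_xi (lin_mapN phi_lin).
by move/eqP; rewrite eqr_opp eq_sym => /eqP.
Qed.

Lemma iso_ext_res_is_iso : coK_iso (ext_br (res_br eta br) (res_D eta br xi))
  (ext_phi (res_J eta phi)) ext_xi ext_eta (ext_g (res_h eta g))
  br phi xi eta g (iso_ext_res xi eta).
Proof.
have eta_iso a (u : subvs_of K) : eta (a *: xi + vsval u) = a.
  by rewrite (lin_formD eta_lin) (lin_formZ eta_lin) eta_xi eta_vsval mulr1 addr0.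
split.
- move=> a [a1 u1] [a2 u2]; rewrite /iso_ext_res pairZ pairD /=.
  by do 3 vsval_push; vect_ring.
- apply: (@Bijective _ _ _ (fun v => ((eta v : R^o), vsproj K (v - eta v *: xi)))).
    by move=> [a u]; rewrite /iso_ext_res /= eta_iso addrC addKr vsvalK.
  move=> v; rewrite /iso_ext_res /= vsprojK; first by rewrite addrC subrK.
  by rewrite (mem_ker_form eta_lin) (lin_formB eta_lin) (lin_formZ eta_lin) eta_xi mulr1 subrr.
- move=> [a u] [b v]; rewrite /iso_ext_res /ext_br /= !res_brE !res_DE scale0r add0r.
  rewrite !(brDl br_lie) !(brDr br_lie) !(brZl br_lie) !(brZr br_lie) (brxx br_lie).
  by rewrite (br_anticomm br_lie (vsval u) xi); vect_ring.
- move=> [a u]; rewrite /iso_ext_res /ext_phi /= res_JE scale0r add0r.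
  by rewrite (lin_mapD phi_lin) (lin_mapZ phi_lin) (acm_phi_xi acm) scaler0 add0r.
split.
- by rewrite /iso_ext_res /ext_xi /= scale1r addr0.
- by move=> [a u]; rewrite /iso_ext_res /ext_eta /= eta_iso.
- move=> [a u] [b v]; rewrite /iso_ext_res /ext_g /res_h /=.
  rewrite !(bilinDl g_bil) !(bilinZl g_bil) !(bilinDr g_bil) !(bilinZr g_bil).
  rewrite !(acm_g_xi acm) (ip_sym g_ip (vsval u) xi) (acm_g_xi acm) !eta_vsval eta_xi; ring.
Qed.

Lemma coKahler_to_kahler_der : vdim V = n.*2.+1 ->
  [/\ vdim (subvs_of K) = n.*2,
      kahler_der alpha (res_br eta br) (res_J eta phi) (res_h eta g) (res_D eta br xi)
    & coK_iso (ext_br (res_br eta br) (res_D eta br xi))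
        (ext_phi (res_J eta phi)) ext_xi ext_eta (ext_g (res_h eta g))
        br phi xi eta g (iso_ext_res xi eta)].
Proof.
move=> dimV; split; last exact: iso_ext_res_is_iso.
  by apply/eq_add_S; rewrite (vdim_ker_form eta_lin (v := xi)) ?eta_xi ?oner_neq0.
by split; [exact: res_kahler | exact: res_der | exact: res_symp | exact: res_DJ].
Qed.
End Restriction.

Theorem mainTheorem7 (R : realType) (alpha : R) (n : nat) (hn : (0 < n)%N) :
  (* coKahler  ->  Kahler with derivation, and back again up to the canonical iso *)
  (forall (V : vectType R) (br : V -> V -> V) (phi : V -> V) (xi : V)
          (eta : V -> R) (g : V -> V -> R),
     vdim V = n.*2.+1 ->
     alpha_coKahler n alpha br phi xi eta g ->
     [/\ vdim (subvs_of (ker_form eta)) = n.*2,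
         kahler_der alpha (res_br eta br) (res_J eta phi) (res_h eta g)
                          (res_D eta br xi)
       & coK_iso (ext_br (res_br eta br) (res_D eta br xi))
                 (ext_phi (res_J eta phi)) ext_xi ext_eta
                 (ext_g (res_h eta g))
                 br phi xi eta g (iso_ext_res xi eta)]) /\
  (* Kahler with derivation  ->  coKahler, and back again up to the canonical iso *)
  (forall (H : vectType R) (brH : H -> H -> H) (J : H -> H) (h : H -> H -> R)
          (D : H -> H),
     vdim H = n.*2 ->
     kahler_der alpha brH J h D ->
     [/\ vdim (R^o * H)%type = n.*2.+1,
         alpha_coKahler n alpha (ext_br brH D) (ext_phi J) ext_xi (@ext_eta _ H)
                        (ext_g h)
       & kahler_der_iso brH J h D
           (res_br (@ext_eta _ H) (ext_br brH D)) (res_J (@ext_eta _ H) (ext_phi J))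
           (res_h (@ext_eta _ H) (ext_g h)) (res_D (@ext_eta _ H) (ext_br brH D) ext_xi)
           (@iso_H_ker _ H)]).
Proof.
(* The correspondence also holds for n = 0. *)
split=> [V br phi xi eta g dimV coK | H brH J h D dimH kd].
- exact: coKahler_to_kahler_der.
- exact: kahler_der_to_coKahler.
Qed.
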